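(* There are absolute constants $a,b>0$ such that for every integer $r\ge1$ and every finite graph $G$, \[\tilde\nabla_{r-1}(G)\le \bigl(a\cdot r\cdot \mathrm{fw}_r(G)\cdot\deg(G)+b\bigr)^{36}.\]
   Context: Graphs are finite, simple, undirected. $\tilde\nabla_s(G)$ is the maximum of $2|E(H)|/|V(H)|$ over graphs $H$ such that some graph obtained from $H$ by replacing every edge by a path of length at most $s+1$ is a subgraph of $G$. $\deg(G)$ is the degeneracy: the least $d$ such that some total order of $V(G)$ has every vertex with at most $d$ earlier neighbours. A $k$-flip of $G$ is obtained by choosing a partition of $V(G)$ into at most $k$ parts and, for some pairs $A,B$ of (possibly equal) parts, inverting adjacency of every pair of distinct $x\in A,y\in B$. Flipper game of radius $r$ and width $k$: $G_0=G$, runner chooses $v_0$; in round $i\ge1$ the flipper announces a $k$-flip $G_i$ of $G$, the runner moves from $v_{i-1}$ to $v_i$ along a path of length at most $r$ in $G_{i-1}$; the flipper wins if $v_i$ is isolated in $G_i$. $\mathrm{fw}_r(G)$ is the least $k$ for which the flipper has a winning strategy. *)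

(* Finite simple graphs are symmetric irreflexive relations
   [e : rel T] on a finType [T]. *)
From mathcomp Require Import all_boot all_order all_algebra.
Set Implicit Arguments. Unset Strict Implicit. Unset Printing Implicit Defensive.
Import Order.TTheory GRing.Theory Num.Theory.

Section Defs.
Variable T : finType.
Implicit Types (e g : rel T).

(* A total order of V(G) is given by an injective rank function into nat;
   [d] bounds the number of earlier neighbours of every vertex. *)
Definition has_degeneracy_order e (d : nat) : Prop :=
  exists rk : T -> nat, injective rk /\
    forall v : T, #|[set u | e v u && (rk u < rk v)]| <= d.

Definition is_degeneracy e (d : nat) : Prop :=
  has_degeneracy_order e d /\ forall d', has_degeneracy_order e d' -> d <= d'.

(* k-flip: partition given by [part : T -> 'I_k] (at most k nonempty parts),
   and a symmetric relation [F] on parts saying which pairs (A,B) (possibly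
   A = B) get their adjacency inverted between distinct vertices. *)
Definition flip e (k : nat) (part : T -> 'I_k) (F : rel 'I_k) : rel T :=
  fun x y => (x != y) && (e x y (+) F (part x) (part y)).

Definition isolated g (w : T) : Prop := forall u, ~~ g w u.

Definition reach g (r : nat) (v w : T) : Prop :=
  exists s : seq T, size s <= r /\ path g v s /\ last v s = w.

(* The position is the
   previous graph G_{i-1} together with the runner's vertex v_{i-1};
   flipper wins from it if he can announce a k-flip G_i of G such that every
   runner move (path of length <= r in G_{i-1}) ends at a vertex isolated
   in G_i or at a position again winning for flipper.  Being an inductive
   predicate, this means flipper wins in finitely many rounds. *)
Inductive flipper_wins_from e (r k : nat) : rel T -> T -> Prop :=
| FlipperWin (g : rel T) (v : T) (part : T -> 'I_k) (F : rel 'I_k) :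
    symmetric F ->
    (forall w, reach g r v w ->
       isolated (flip e part F) w \/ flipper_wins_from e r k (flip e part F) w) ->
    flipper_wins_from e r k g v.

(* G_0 = G, and runner chooses v_0 arbitrarily *)
Definition flipper_wins e (r k : nat) : Prop :=
  forall v0 : T, flipper_wins_from e r k e v0.

Definition is_flip_width e (r k : nat) : Prop :=
  flipper_wins e r k /\ forall k', flipper_wins e r k' -> k <= k'.

End Defs.

(* The graph H = (U, f) has a subdivision, where every edge is replaced by a
   path of length at most s+1, that is a subgraph of G = (T, e):
   [phi] maps branch vertices injectively, [P u v] is the sequence of internal
   vertices of the path replacing the edge uv (P v u is its reverse); paths
   have at most s internal vertices, are simple, avoid branch vertices, are
   internally disjoint from each other, and consecutive vertices are adjacent
   in G. *)
Definition shallow_subdivision_in (U T : finType) (f : rel U) (e : rel T)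
    (s : nat) : Prop :=
  exists (phi : U -> T) (P : U -> U -> seq T),
    injective phi /\
    forall u v, f u v ->
      [/\ path e (phi u) (rcons (P u v) (phi v)),
          size (P u v) <= s,
          uniq (P u v),
          P v u = rev (P u v) &
          ((forall x, x \in P u v -> forall w, x != phi w) /\
          (forall u' v', f u' v' -> forall x, x \in P u v -> x \in P u' v' ->
             (u' = u /\ v' = v) \/ (u' = v /\ v' = u)))].

Definition num_edges (U : finType) (f : rel U) : nat :=
  #|[set p : U * U | f p.1 p.2]| %/ 2.

(* \tilde\nabla_s(G) <= x, i.e. 2|E(H)|/|V(H)| <= x for every H that is a
   (<= s+1)-subdivision-subgraph of G (with the convention 0/0 = 0). *)
Definition nabla_le (T : finType) (e : rel T) (s : nat) (x : rat) : Prop :=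
  forall (U : finType) (f : rel U), symmetric f -> irreflexive f ->
    shallow_subdivision_in f e s ->
    ((2 * num_edges f)%:R / #|U|%:R <= x)%R.

From mathcomp Require Import all_boot all_order all_algebra.
From mathcomp Require Import zify.
Import Order.TTheory GRing.Theory Num.Theory.
Set Implicit Arguments. Unset Strict Implicit. Unset Printing Implicit Defensive.

(* Degeneracy d rules out K_{d+1,d+1} in G.  If H has average degree above
   2D, where D = (d+1)(M'+2), M = kd+2 and M' = M+6rkd, then some X ⊆ V(H)
   induces minimum degree at least D, and the runner beats every flipper of
   width k by staying on branch vertices whose radius-r ball in the current
   graph contains at least M branch vertices of X.

   Say that a vertex u touches b ∈ X if, in the next flip G', u is adjacent to
   the first inner vertex of the path from some a ∈ X to b.  Following that
   path, the ball of radius j around u in G' is left along an edge xy of G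
   where either the part of x meets the ball in at most d vertices, or y is
   G-complete to a part meeting it in more than d vertices.  Either kind of
   vertex numbers at most kd per radius and determines at most three branch
   vertices, so all but 6rkd touched vertices are reached within radius r.
   Within one part, at most d branch vertices touch fewer than M' vertices:
   d+1 of them would be G-complete to the first inner vertices of more than d
   paths leaving one of them.  So among the more than kd branch vertices the
   runner sees, one still sees M of them after the flip, and the runner is
   never isolated. *)

Lemma card_bigcup_leq_sum (T I : finType) (P : pred I) (F : I -> {set T}) :
  #|\bigcup_(i | P i) F i| <= \sum_(i | P i) #|F i|.
Proof.
elim/big_rec2: _ => [|i n S _ IH]; first by rewrite cards0.
by apply: leq_trans (leq_card_setU _ _) _; rewrite leq_add2l.
Qed.

Lemma card_bigcup_leq_mul (T I : finType) (P : pred I) (F : I -> {set T}) c :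
  (forall i, P i -> #|F i| <= c) -> #|\bigcup_(i | P i) F i| <= #|I| * c.
Proof.
move=> small; apply: leq_trans (card_bigcup_leq_sum P F) _.
apply: leq_trans (leq_sum _ small) _.
by rewrite (sum_nat_const P) leq_mul2r max_card orbT.
Qed.

Lemma exists_subset_card (T : finType) (A : {set T}) n :
  n <= #|A| -> exists2 B : {set T}, B \subset A & #|B| = n.
Proof.
case/card_geqP=> s [s_uniq <- sA]; exists [set x in s].
  by apply/subsetP=> x; rewrite inE => /sA.
by rewrite cardsE (card_uniqP s_uniq).
Qed.

Lemma exists_true_to_false (c : nat -> bool) m n : m <= n -> c m -> ~~ c n ->
  exists j, [/\ m <= j, j < n, c j & ~~ c j.+1].
Proof.
elim: n => [|n IH]; first by rewrite leqn0 => /eqP-> ->.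
rewrite leq_eqVlt => /orP[/eqP-> -> //|]; rewrite ltnS => mn cm cn.
have [cn'|cn'] := boolP (c n); first by exists n.
by have [j [? ? ? ?]] := IH mn cm cn'; exists j; split=> //; apply: ltnW.
Qed.

Lemma biclique_small_side (T : finType) (e : rel T) d (X Y : {set T}) :
  symmetric e -> irreflexive e -> has_degeneracy_order e d ->
  (forall x y, x \in X -> y \in Y -> e x y) -> #|X| <= d \/ #|Y| <= d.
Proof.
move=> e_sym e_irr [rk [rk_inj rk_deg]].
wlog [z zX zmax] : X Y / exists2 z, z \in X & forall w, w \in X :|: Y -> rk w <= rk z.
  move=> hwlog XY; have [/eqP|[z0 z0XY]] := set_0Vmem (X :|: Y).
    by rewrite setU_eq0 => /andP[/eqP-> _]; left; rewrite cards0.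
  case: (arg_maxnP rk z0XY) => z /setUP[zX|zY] zmax; first by apply: hwlog XY; exists z.
  rewrite or_comm; apply: hwlog => [|y x yY xX]; last by rewrite e_sym XY.
  by exists z => // w; rewrite setUC; apply: zmax.
move=> XY; right; apply: leq_trans (rk_deg z); apply: subset_leq_card.
apply/subsetP=> y yY; rewrite inE XY //=.
have zy : z != y by apply: contraTneq (XY z y zX yY) => ->; rewrite e_irr.
rewrite ltn_neqAle zmax ?inE ?yY ?orbT // andbT.
by apply: contra zy => /eqP /rk_inj ->.
Qed.

Section Ball.
Variable T : finType.
Implicit Types (g : rel T) (u x y : T).

Fixpoint ball g u j : {set T} :=
  if j is j'.+1 then ball g u j' :|: [set y | [exists x in ball g u j', g x y]]
  else [set u].

Lemma ball_center g u : u \in ball g u 0.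
Proof. by rewrite inE. Qed.

Lemma ball_sub g u j : ball g u j \subset ball g u j.+1.
Proof. exact: subsetUl. Qed.

Lemma ball_step g u j x y : x \in ball g u j -> g x y -> y \in ball g u j.+1.
Proof. by move=> xB gxy; rewrite !inE; apply/orP; right; apply/exists_inP; exists x. Qed.

Lemma ball_reach g u j y : y \in ball g u j -> reach g j u y.
Proof.
elim: j y => [|j IH] y /=; first by rewrite inE => /eqP->; exists [::].
case/setUP=> [/IH [s [sj [gs <-]]]|]; first by exists s; split=> //; apply: leqW.
rewrite inE => /exists_inP[x /IH [s [sj [gs sx]]] gxy].
by exists (rcons s y); rewrite size_rcons ltnS rcons_path gs sx last_rcons gxy.
Qed.

Lemma reach_not_isolated g j u y : reach g j u y -> y != u -> ~ isolated g u.
Proof.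
case=> [[|x s] [_ [/= gs <-]]]; first by rewrite eqxx.
by case/andP: gs => gux _ _ /(_ x); rewrite gux.
Qed.

End Ball.

Section DenseCore.
Variables (U : finType) (f : rel U).
Hypothesis f_sym : symmetric f.
Implicit Types (Z : {set U}).

Definition arcs Z := #|[set p : U * U | [&& p.1 \in Z, p.2 \in Z & f p.1 p.2]]|.

Lemma arcs_setD1 Z x :
  x \in Z -> arcs Z <= arcs (Z :\ x) + 2 * #|[set b in Z | f x b]|.
Proof.
move=> xZ; set N := [set b in Z | f x b].
have arcs_split : [set p : U * U | [&& p.1 \in Z, p.2 \in Z & f p.1 p.2]] \subset
   [set p : U * U | [&& p.1 \in Z :\ x, p.2 \in Z :\ x & f p.1 p.2]]
   :|: ([set (x, b) | b in N] :|: [set (a, x) | a in N]).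
  apply/subsetP=> [[a b]]; rewrite !inE /= => /and3P[aZ bZ fab].
  have [ax|_] := eqVneq a x; first by subst a; rewrite imset_f ?orbT // inE bZ fab.
  have [bx|_] := eqVneq b x; last by rewrite aZ bZ fab.
  by subst b; rewrite (imset_f (fun a => (a, x))) ?orbT // inE aZ f_sym fab.
apply: leq_trans (subset_leq_card arcs_split) _.
apply: leq_trans (leq_card_setU _ _) _; rewrite leq_add2l mul2n -addnn.
apply: leq_trans (leq_card_setU _ _) _.
exact: leq_add (leq_imset_card _ _) (leq_imset_card _ _).
Qed.

Lemma dense_core D Z : 2 * D * #|Z| < arcs Z ->
  exists2 X : {set U}, X != set0 & forall a, a \in X -> D <= #|[set b in X | f a b]|.
Proof.
have [n] := ubnP #|Z|; elim: n Z => // n IH Z /ltnSE Zn dense.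
have [all_deg|] := boolP [forall a in Z, D <= #|[set b in Z | f a b]|].
  exists Z; last by move=> a aZ; move/forall_inP: all_deg; apply.
  have /card_gt0P[[x y]] : 0 < arcs Z by apply: leq_ltn_trans dense.
  by rewrite inE => /and3P[xZ _ _]; apply/set0Pn; exists x.
rewrite negb_forall_in => /exists_inP[x xZ]; rewrite -ltnNge => low_x.
apply: (IH (Z :\ x)); have := cardsD1 x Z; rewrite xZ; first by lia.
by have := arcs_setD1 xZ; nia.
Qed.

End DenseCore.

Lemma density_bound r k d : 0 < r -> 0 < k ->
  2 * (d.+1 * (k * d + 2 + r * (6 * (k * d))).+2) <= (r * k * d + 2) ^ 36.
Proof.
move=> r_gt0 k_gt0; set Z := r * k * d.
have kdZ : k * d <= Z by rewrite /Z -mulnA leq_pmull.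
have dZ : d <= Z by rewrite /Z leq_pmull // muln_gt0 r_gt0 k_gt0.
have -> : r * (6 * (k * d)) = 6 * Z by rewrite /Z mulnCA !mulnA.
have lhs : d.+1 * (k * d + 2 + 6 * Z).+2 <= Z.+1 * (7 * Z + 4) by apply: leq_mul; lia.
apply: leq_trans (_ : 16 * (Z + 2) ^ 2 <= _); first by rewrite expnS expn1; nia.
rewrite (_ : 36 = 34 + 2) // expnD leq_mul2r; apply/orP; right.
apply: leq_trans (_ : (Z + 2) ^ 4 <= _); first by rewrite -[16]/(2 ^ 4) leq_exp2r ?leq_addl.
by rewrite leq_pexp2l ?addn_gt0 ?orbT.
Qed.

Section Subdivision.
Variables (T : finType) (e : rel T) (d : nat).
Hypotheses (e_sym : symmetric e) (e_irr : irreflexive e) (degen : has_degeneracy_order e d).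
Variables (U : finType) (f : rel U) (phi : U -> T) (P : U -> U -> seq T) (r : nat).
Hypotheses (phi_inj : injective phi) (r_gt0 : 0 < r).
Hypothesis subdivP : forall a b, f a b ->
  [/\ path e (phi a) (rcons (P a b) (phi b)),
      size (P a b) <= r - 1,
      uniq (P a b),
      P b a = rev (P a b) &
      ((forall x, x \in P a b -> forall w, x != phi w) /\
      (forall a' b', f a' b' -> forall x, x \in P a b -> x \in P a' b' ->
         (a' = a /\ b' = b) \/ (a' = b /\ b' = a)))].

Lemma size_subdiv a b : f a b -> size (P a b) < r.
Proof. by case/subdivP=> _ + _ _ _; lia. Qed.

Lemma subdiv_avoid a b x w : f a b -> x \in P a b -> x != phi w.
Proof. by case/subdivP=> _ _ _ _ [avoid _] /avoid. Qed.

Lemma subdiv_disjoint a b a' b' x : f a b -> f a' b' -> x \in P a b -> x \in P a' b' ->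
  (a' = a /\ b' = b) \/ (a' = b /\ b' = a).
Proof. by case/subdivP=> _ _ _ _ [_ disj] /disj; apply. Qed.

(* Indices past the end of the path give [phi b]. *)
Definition path_at a b j := nth (phi b) (phi a :: rcons (P a b) (phi b)) j.

Lemma path_at_end a b j : size (P a b) < j -> path_at a b j = phi b.
Proof.
by rewrite /path_at; case: j => //= j; rewrite ltnS nth_rcons => /leq_gtF->; case: ifP.
Qed.

Lemma path_at_inner a b j : 0 < j -> j <= size (P a b) -> path_at a b j \in P a b.
Proof. by rewrite /path_at; case: j => //= j _ jP; rewrite nth_rcons jP mem_nth. Qed.

Lemma path_at_edge a b j : f a b -> j <= size (P a b) ->
  e (path_at a b j) (path_at a b j.+1).
Proof.
by case/subdivP=> /(pathP (phi b)) edge _ _ _ _ jP; apply: edge; rewrite size_rcons ltnS.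
Qed.

Lemma path_at1_inj a b b' : f a b -> f a b' -> path_at a b 1 = path_at a b' 1 -> b = b'.
Proof.
move=> fab fab'.
have [short|long] := ltnP (size (P a b)) 1; have [short'|long'] := ltnP (size (P a b')) 1.
- by rewrite !path_at_end // => /phi_inj.
- rewrite (path_at_end short) => eq_b.
  by case/eqP: (subdiv_avoid b fab' (path_at_inner (ltn0Sn 0) long')).
- rewrite (path_at_end short') => eq_b'.
  by case/eqP: (subdiv_avoid b' fab (path_at_inner (ltn0Sn 0) long)).
- move=> eq1; have x1 := path_at_inner (ltn0Sn 0) long; have x1' := path_at_inner (ltn0Sn 0) long'.
  by rewrite -eq1 in x1'; case: (subdiv_disjoint fab fab' x1 x1') => [[_ ->]|[-> ->]].
Qed.

Definition anchors x : {set U} :=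
  [set b | (phi b == x) || [exists a, f a b && (x \in P a b)]].

Lemma anchors_branch b : b \in anchors (phi b).
Proof. by rewrite inE eqxx. Qed.

Lemma anchors_inner a b x : f a b -> x \in P a b -> b \in anchors x.
Proof. by move=> fab xP; rewrite inE; apply/orP; right; apply/existsP; exists a; rewrite fab. Qed.

Lemma card_anchors x : #|anchors x| <= 3.
Proof.
have card_branch : #|[set b | phi b == x]| <= 1.
  apply/card_le1P=> b; rewrite inE => /eqP bx b'; rewrite !inE.
  by apply/eqP/eqP=> [|-> //]; rewrite -bx => /phi_inj.
have [[a0 b0] /= /andP[f0 x0]|none] := pickP [pred p : U * U | f p.1 p.2 && (x \in P p.1 p.2)].
  apply: leq_trans (_ : #|[set a0; b0] :|: [set b | phi b == x]| <= _).
    apply/subset_leq_card/subsetP=> b; rewrite !inE => /orP[->|/existsP[a /andP[fab xP]]].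
      by rewrite orbT.
    by case: (subdiv_disjoint fab f0 xP x0) => [[_ ->]|[-> _]]; rewrite eqxx ?orbT.
  apply: leq_trans (leq_card_setU _ _) _; rewrite cards2.
  by apply: leq_trans (leq_add (leqnn _) card_branch) _; case: (_ != _).
apply: leq_trans (_ : #|[set b | phi b == x]| <= _); last exact: leq_trans card_branch _.
apply/subset_leq_card/subsetP=> b; rewrite !inE => /orP[-> //|/existsP[a]].
by have := none (a, b) => /= ->.
Qed.

Section Flip.
Variables (k : nat) (part : T -> 'I_k) (F : rel 'I_k) (g : rel T).
Hypothesis g_flip : g =2 flip e part F.

Lemma flip_class_adj x x' y : part x' = part x -> x' != y -> x != y ->
  ~~ g x' y -> ~~ g x y -> e x' y = e x y.
Proof.
by rewrite !g_flip /flip => -> -> ->; case: (F _ _); case: (e x' y); case: (e x y).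
Qed.

Definition ball_part u j A := [set x in ball g u j | part x == A].

Definition thin u j := [set x in ball g u j | #|ball_part u j (part x)| <= d].

Definition thick_complete u j := [set y | [exists A,
  (d < #|ball_part u j A|) && [forall x in ball_part u j A, e x y]]].

Lemma card_thin u j : #|thin u j| <= k * d.
Proof.
rewrite -[k in k * d]card_ord.
apply: leq_trans (card_bigcup_leq_mul (P := fun A => #|ball_part u j A| <= d)
  (F := ball_part u j) (fun A => id)).
apply/subset_leq_card/subsetP=> x; rewrite inE => /andP[xB small].
by apply/bigcupP; exists (part x); rewrite // inE xB eqxx.
Qed.

Lemma card_thick_complete u j : #|thick_complete u j| <= k * d.
Proof.
rewrite -[k in k * d]card_ord.
apply: leq_trans (card_bigcup_leq_mul (P := fun A => d < #|ball_part u j A|)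
  (F := fun A => [set y | [forall x in ball_part u j A, e x y]]) _).
  apply/subset_leq_card/subsetP=> y; rewrite inE => /existsP[A /andP[big complete]].
  by apply/bigcupP; exists A; rewrite // inE.
move=> A big; have complete x y : x \in ball_part u j A ->
    y \in [set y | [forall x in ball_part u j A, e x y]] -> e x y.
  by move=> xA; rewrite inE => /forall_inP; apply.
by case: (biclique_small_side e_sym e_irr degen complete); rewrite // leqNgt big.
Qed.

Lemma ball_exit u j x y : x \in ball g u j -> y \notin ball g u j.+1 -> e x y ->
  x \in thin u j \/ y \in thick_complete u j.
Proof.
move=> xB yB exy; have [small|big] := leqP #|ball_part u j (part x)| d.
  by left; rewrite inE xB.
have off z : z \in ball g u j -> (z != y) && ~~ g z y.
  move=> zB; apply/andP; split; last by apply: contra yB; apply: ball_step.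
  by apply: contraNneq yB => <-; apply: (subsetP (ball_sub _ _ _)).
right; rewrite inE; apply/existsP; exists (part x); rewrite big /=.
apply/forall_inP=> x'; rewrite inE => /andP[x'B /eqP px'].
have /andP[x'y nx'y] := off _ x'B; have /andP[xy nxy] := off _ xB.
by rewrite (flip_class_adj px' x'y xy nx'y nxy).
Qed.

Definition blockers u j := \bigcup_(x in thin u j :|: thick_complete u j) anchors x.

Lemma card_blockers u j : #|blockers u j| <= 6 * (k * d).
Proof.
apply: leq_trans (card_bigcup_leq_sum _ _) _.
apply: leq_trans (leq_sum _ (fun x _ => card_anchors x)) _.
rewrite sum_nat_const; apply: leq_trans (leq_mul (leq_card_setU _ _) (leqnn 3)) _.
by have := card_thin u j; have := card_thick_complete u j; lia.
Qed.

Variable X : {set U}.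

Definition touched u := [set b in X | [exists a in X, f a b && g u (path_at a b 1)]].

Definition reached u := [set b in X | phi b \in ball g u r].

Lemma touched_unreached_blocked u b : b \in touched u -> phi b \notin ball g u r ->
  exists j : 'I_r, b \in blockers u j.
Proof.
rewrite inE => /andP[_ /exists_inP[a _ /andP[fab gu1]]] bR.
have outr : path_at a b r \notin ball g u r by rewrite path_at_end ?size_subdiv.
have [j [j_gt0 j_lt inj outj]] := @exists_true_to_false
  (fun j => path_at a b j \in ball g u j) 1 r r_gt0 (ball_step (ball_center g u) gu1) outr.
have jP : j <= size (P a b).
  rewrite leqNgt; apply: contra outj => jP.
  have -> : path_at a b j.+1 = phi b by apply: path_at_end; apply: ltnW.
  by rewrite -(path_at_end jP); apply: (subsetP (ball_sub _ _ _)).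
exists (Ordinal j_lt); apply/bigcupP.
case: (ball_exit inj outj (path_at_edge fab jP)) => [thin_j|compl].
  exists (path_at a b j); first by rewrite inE thin_j.
  exact: anchors_inner fab (path_at_inner j_gt0 jP).
exists (path_at a b j.+1); first by rewrite inE compl orbT.
have [j1P|j1P] := leqP j.+1 (size (P a b)).
  exact: anchors_inner fab (path_at_inner (ltn0Sn _) j1P).
by rewrite path_at_end ?anchors_branch.
Qed.

Lemma card_touched u : #|touched u| <= #|reached u| + r * (6 * (k * d)).
Proof.
have cover : touched u \subset reached u :|: \bigcup_(j : 'I_r) blockers u j.
  apply/subsetP=> b bT; have [bR|bR] := boolP (phi b \in ball g u r).
    by move: bT; rewrite !inE bR => /andP[-> _].
  have [j bj] := touched_unreached_blocked bT bR.
  by rewrite inE; apply/orP; right; apply/bigcupP; exists j.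
apply: leq_trans (subset_leq_card cover) _; apply: leq_trans (leq_card_setU _ _) _.
rewrite leq_add2l -[r in r * _]card_ord.
exact: (card_bigcup_leq_mul (F := fun j : 'I_r => blockers u j) (fun j _ => card_blockers u j)).
Qed.

Variable M' : nat.
Hypothesis X_mindeg : forall a, a \in X -> d.+1 * M'.+2 <= #|[set b in X | f a b]|.

Definition low_touch := [set u in phi @: X | #|touched u| < M'].

Section OneClass.
Variables (A : 'I_k) (B : {set T}) (a1 : U).
Hypotheses (B_low : B \subset [set u in low_touch | part u == A]) (B_card : #|B| <= d.+1).
Hypotheses (a1X : a1 \in X) (a1B : phi a1 \in B).

Definition fresh :=
  [set b in X | [&& f a1 b, b \notin \bigcup_(u in B) touched u & phi b \notin B]].

Lemma card_fresh : d < #|fresh|.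
Proof.
have cover : [set b in X | f a1 b] \subset
    fresh :|: \bigcup_(u in B) touched u :|: [set b | phi b \in B].
  apply/subsetP=> b; rewrite !inE => /andP[bX fab].
  by case: (b \in \bigcup_(u in B) touched u); case: (phi b \in B); rewrite ?orbT // bX fab.
have card_touched_B : #|\bigcup_(u in B) touched u| <= d.+1 * M'.
  have low u : u \in B -> #|touched u| <= M'.
    by move=> uB; have := subsetP B_low u uB; rewrite !inE => /andP[/andP[_ /ltnW]].
  apply: leq_trans (card_bigcup_leq_sum _ _) (leq_trans (leq_sum _ low) _).
  by rewrite sum_nat_const leq_mul2r B_card orbT.
have card_preB : #|[set b | phi b \in B]| <= d.+1.
  apply: leq_trans B_card; rewrite -(card_imset _ phi_inj).
  by apply/subset_leq_card/subsetP=> y /imsetP[b]; rewrite inE => bB ->.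
have := leq_trans (subset_leq_card cover)
  (leq_trans (leq_card_setU _ _) (leq_add (leq_card_setU _ _) (leqnn _))).
by have := X_mindeg a1X; rewrite !mulnS; lia.
Qed.

Lemma fresh_first_complete u b : u \in B -> b \in fresh -> e u (path_at a1 b 1).
Proof.
move=> uB; rewrite inE => /and4P[bX fab bU bB].
have not_adj v : v \in B -> ~~ g v (path_at a1 b 1).
  move=> vB; apply: contra bU => gv; apply/bigcupP; exists v => //.
  by rewrite inE bX; apply/exists_inP; exists a1; rewrite ?fab.
have off v : v \in B -> v != path_at a1 b 1.
  move=> vB; have [short|long] := ltnP (size (P a1 b)) 1.
    by rewrite path_at_end //; apply: contraNneq bB => <-.
  have := subsetP B_low v vB; rewrite !inE => /andP[/andP[/imsetP[w _ ->] _] _].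
  by rewrite eq_sym (subdiv_avoid _ fab (path_at_inner (ltn0Sn 0) long)).
have class v : v \in B -> part v = A.
  by move=> vB; have := subsetP B_low v vB; rewrite inE => /andP[_ /eqP].
have same_class : part u = part (phi a1) by rewrite !class.
rewrite (flip_class_adj same_class (off _ uB) (off _ a1B) (not_adj _ uB) (not_adj _ a1B)).
exact: path_at_edge fab (leq0n _).
Qed.

Lemma low_touch_class_small : #|B| <= d.
Proof.
have complete u y : u \in B -> y \in [set path_at a1 b 1 | b in fresh] -> e u y.
  by move=> uB /imsetP[b bF ->]; apply: fresh_first_complete.
case: (biclique_small_side e_sym e_irr degen complete) => // small.
have := card_fresh; rewrite -(card_in_imset (f := fun b => path_at a1 b 1)).
  by rewrite ltnNge small.
by move=> b b'; rewrite !inE => /and4P[_ fab _ _] /and4P[_ fab' _ _]; apply: path_at1_inj.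
Qed.

End OneClass.

Lemma card_low_touch_class A : #|[set u in low_touch | part u == A]| <= d.
Proof.
rewrite leqNgt; apply/negP => /exists_subset_card[B BA cardB].
have /card_gt0P[u uB] : 0 < #|B| by rewrite cardB.
have := subsetP BA u uB; rewrite !inE => /andP[/andP[/imsetP[a1 a1X u_a1] _] _].
rewrite u_a1 in uB.
by have := low_touch_class_small BA (eq_leq cardB) a1X uB; rewrite cardB ltnn.
Qed.

Lemma card_low_touch : #|low_touch| <= k * d.
Proof.
rewrite -[k in k * d]card_ord.
apply: leq_trans (card_bigcup_leq_mul (P := xpredT)
  (F := fun A => [set u in low_touch | part u == A]) (fun A _ => card_low_touch_class A)).
apply/subset_leq_card/subsetP=> u uL.
by apply/bigcupP; exists (part u) => //; rewrite inE uL eqxx.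
Qed.

End Flip.

Section Game.
Variables (k : nat) (X : {set U}).
Let M := k * d + 2.
Let M' := M + r * (6 * (k * d)).
Hypothesis X_mindeg : forall a, a \in X -> d.+1 * M'.+2 <= #|[set b in X | f a b]|.

Lemma exists_good_branch (part : T -> 'I_k) F g (S : {set U}) :
  g =2 flip e part F -> S \subset X -> k * d < #|S| ->
  exists2 b, b \in S & M <= #|reached g X (phi b)|.
Proof.
move=> g_flip SX bigS.
have : ~~ (phi @: S \subset low_touch g X M').
  apply: contraL bigS => /subset_leq_card; rewrite card_imset // -leqNgt => le.
  exact: leq_trans le (card_low_touch g_flip X_mindeg).
case/subsetPn=> _ /imsetP[b bS ->]; rewrite inE imset_f ?(subsetP SX) //= -leqNgt => good.
by exists b => //; have := card_touched g_flip X (phi b); rewrite /M' in good; lia.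
Qed.

Lemma runner_survives : forall g v, flipper_wins_from e r k g v -> ~ M <= #|reached g X v|.
Proof.
(* The induction principle of [flipper_wins_from] gives no hypothesis under the
   nested disjunction, hence the explicit structural recursion. *)
fix survive 3 => g v [] {}g {}v part F _ win goodv.
have RX : reached g X v \subset X by apply/subsetP=> b; rewrite inE => /andP[].
have bigR : k * d < #|reached g X v| by move: goodv; rewrite /M; lia.
have [b bR goodb] := exists_good_branch (g := flip e part F) (fun _ _ => erefl) RX bigR.
have reach_b : reach g r v (phi b) by apply: ball_reach; move: bR; rewrite inE => /andP[].
case: (win _ reach_b) => [iso|wins]; last exact: survive _ _ wins goodb.
have /card_gt0P[b' /setD1P[b'b b'R]] : 0 < #|reached (flip e part F) X (phi b) :\ b|.
  by have := cardsD1 b (reached (flip e part F) X (phi b)); move: goodb; rewrite /M; lia.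
have reach_b' : reach (flip e part F) r (phi b) (phi b').
  by apply: ball_reach; move: b'R; rewrite inE => /andP[].
by apply: (reach_not_isolated reach_b') iso; rewrite (inj_eq phi_inj).
Qed.

Lemma flipper_loses : X != set0 -> ~ flipper_wins e r k.
Proof.
case/set0Pn=> a0 a0X fw.
have [part _] : exists part : T -> 'I_k, True by case: (fw (phi a0)) => g v part; exists part.
have e_flip : e =2 flip e part (fun _ _ => false).
  by move=> x y; rewrite /flip addbF; case: eqVneq => // ->; rewrite e_irr.
have bigX : k * d < #|X|.
  have : #|[set b in X | f a0 b]| <= #|X|.
    by apply/subset_leq_card/subsetP=> b; rewrite inE => /andP[].
  by have := X_mindeg a0X; rewrite /M' /M; nia.
have [b _ goodb] := exists_good_branch e_flip (subxx X) bigX.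
exact: runner_survives (fw (phi b)) goodb.
Qed.

End Game.
End Subdivision.

Lemma arcs_leq_of_flipper_wins (T : finType) (e : rel T) r k d (U : finType) (f : rel U) :
  symmetric e -> irreflexive e -> 0 < r -> flipper_wins e r k -> has_degeneracy_order e d ->
  symmetric f -> shallow_subdivision_in f e (r - 1) ->
  arcs f setT <= 2 * (d.+1 * (k * d + 2 + r * (6 * (k * d))).+2) * #|U|.
Proof.
move=> e_sym e_irr r_gt0 fw degen f_sym [phi [P [phi_inj subdivP]]].
rewrite leqNgt -cardsT; apply/negP => /(dense_core f_sym)[X X0 X_mindeg].
exact: (flipper_loses e_sym e_irr degen phi_inj r_gt0 subdivP X_mindeg X0 fw).
Qed.

Lemma num_edges_leq_flip_width (T : finType) (e : rel T) r k d (U : finType) (f : rel U) :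
  symmetric e -> irreflexive e -> 0 < r -> flipper_wins e r k -> has_degeneracy_order e d ->
  symmetric f -> shallow_subdivision_in f e (r - 1) ->
  2 * num_edges f <= (r * k * d + 2) ^ 36 * #|U|.
Proof.
move=> e_sym e_irr r_gt0 fw degen f_sym subdiv.
have edges_arcs : 2 * num_edges f <= arcs f setT.
  rewrite /num_edges mulnC; apply: leq_trans (leq_divM _ _) (eq_leq _).
  by apply: eq_card => p; rewrite !inE.
apply: leq_trans edges_arcs
  (leq_trans (arcs_leq_of_flipper_wins e_sym e_irr r_gt0 fw degen f_sym subdiv) _).
rewrite leq_mul2r; have [//|/card_gt0P[u0 _]] := posnP #|U|.
have [phi _] := subdiv.
have k_gt0 : 0 < k.
  by case: (fw (phi u0)) => g v part _ _ _; case: (part (phi u0)) => i; apply: leq_ltn_trans.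
by rewrite density_bound ?orbT.
Qed.

Theorem mainTheorem9 :
  exists a b : rat, (0 < a)%R /\ (0 < b)%R /\
    forall r : nat, 1 <= r ->
    forall (T : finType) (e : rel T), symmetric e -> irreflexive e ->
    forall k d : nat, is_flip_width e r k -> is_degeneracy e d ->
      nabla_le e (r - 1)
        ((a * r%:R * k%:R * d%:R + b) ^+ 36)%R.
Proof.
exists 1%R, 2%R; split; first exact: ltr01.
split=> [|r r_gt0 T e e_sym e_irr k d [fw _] [degen _] U f f_sym _ subdiv]; first by rewrite ltr0n.
have edges := num_edges_leq_flip_width e_sym e_irr r_gt0 fw degen f_sym subdiv.
have -> : ((1 * r%:R * k%:R * d%:R + 2 : rat) = (r * k * d + 2)%N%:R)%R.
  by rewrite mul1r natrD !natrM.
rewrite -natrX; have [->|U_gt0] := posnP #|U|; first by rewrite invr0 mulr0 ler0n.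
by rewrite ler_pdivrMr ?ltr0n // -natrM ler_nat.
Qed.
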